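(* Assume each operator $L_r:Lip_d(I)\to Lip_d(I)$, $r\in\mathbb{N}$, is continuous. Then the non-stationary fractal operator $\mathfrak{F}^\alpha_b:Lip_d(I)\to C(I)$, $\mathfrak{F}^\alpha_b(f)=f^\alpha_b$, is continuous.
   Context: Setting: $I=[x_0,x_N]$ with partition $\Delta: x_0<x_1<\dots<x_N$, $I_i=[x_{i-1},x_i]$, $l_i:I\to I_i$ the increasing affine bijection $l_i(x)=\frac{x_i-x_{i-1}}{x_N-x_0}x+\frac{x_Nx_{i-1}-x_0x_i}{x_N-x_0}$, and $Q_i=l_i^{-1}$. Scaling functions $\alpha_{i,r}:I\to\mathbb{R}$ ($i=1,\dots,N$, $r\in\mathbb{N}$) are continuous with $\|\alpha\|_\infty:=\sup_{r}\max_i\|\alpha_{i,r}\|_\infty<1$. $Lip_d(I)$ ($0<d\le1$) is the space of real functions $g$ on $I$ with $\sup_{x\ne y}|g(x)-g(y)|/|x-y|^d<\infty$, regarded as a subset of $C(I)$ with the supremum norm (all topologies here are those of the supremum norm). $L_r:Lip_d(I)\to Lip_d(I)$ ($r\in\mathbb{N}$) are operators (not necessarily linear) with $(L_rg)(x_0)=g(x_0)$, $(L_rg)(x_N)=g(x_N)$ for all $g$, and $\sup_r\|L_r\|_\infty<\infty$, where $\|L_r\|_\infty=\sup_{g\ne0}\|L_rg\|_\infty/\|g\|_\infty$. Non-stationary $\alpha$-fractal function: for $f\in C(I)$ and base functions $b_r\in C(I)$ with $b_r(x_0)=f(x_0)$, $b_r(x_N)=f(x_N)$, $\sup_r\|b_r\|_\infty<\infty$,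 let $C_f(I)=\{g\in C(I):g(x_0)=f(x_0),g(x_N)=f(x_N)\}$ and $T^{\alpha_r}:C_f(I)\to C_f(I)$, $(T^{\alpha_r}g)(x)=f(x)+\alpha_{i,r}(Q_i(x))(g-b_r)(Q_i(x))$ for $x\in I_i$. For every $g\in C_f(I)$, $T^{\alpha_1}\circ\cdots\circ T^{\alpha_r}g$ converges uniformly as $r\to\infty$ to a function independent of $g$; this is the non-stationary $\alpha$-fractal function. $f^\alpha_b$ denotes it for $f\in Lip_d(I)$ with $b_r=L_rf$. *)

From Stdlib Require Import Reals Lra Lia.
Open Scope R_scope.

(* Partition xs 0 < xs 1 < ... < xs N of I = [xs 0, xs N]. *)
Definition inI (xs : nat -> R) (N : nat) (x : R) : Prop := xs 0%nat <= x <= xs N.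

(* Q_i = l_i^{-1}, with l_i(x) = (x_i-x_{i-1})/(x_N-x_0) x + (x_N x_{i-1} - x_0 x_i)/(x_N-x_0) *)
Definition lmap (xs : nat -> R) (N i : nat) (x : R) : R :=
  (xs i - xs (i-1)%nat) / (xs N - xs 0%nat) * x
  + (xs N * xs (i-1)%nat - xs 0%nat * xs i) / (xs N - xs 0%nat).
Definition Qmap (xs : nat -> R) (N i : nat) (y : R) : R :=
  ((xs N - xs 0%nat) * y - (xs N * xs (i-1)%nat - xs 0%nat * xs i))
  / (xs i - xs (i-1)%nat).

(* For x in I: an index i in 1..N with x in I_i = [x_{i-1}, x_i]
   (namely the smallest such i). *)
Fixpoint seg (xs : nat -> R) (n : nat) (x : R) : nat :=
  match n with
  | O => 1%nat
  | S O => 1%nat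
  | S k => if Rle_dec x (xs k) then seg xs k x else n
  end.

Definition cont_on_I (xs : nat -> R) (N : nat) (g : R -> R) : Prop :=
  forall x, inI xs N x -> forall eps, 0 < eps -> exists delta, 0 < delta /\
    forall y, inI xs N y -> Rabs (y - x) < delta -> Rabs (g y - g x) < eps.

Definition lipd (xs : nat -> R) (N : nat) (d : R) (g : R -> R) : Prop :=
  exists K, forall x y, inI xs N x -> inI xs N y -> x <> y ->
    Rabs (g x - g y) <= K * Rpower (Rabs (x - y)) d.

Definition dist_le (xs : nat -> R) (N : nat) (g h : R -> R) (c : R) : Prop :=
  forall x, inI xs N x -> Rabs (g x - h x) <= c.

Definition in_Cf (xs : nat -> R) (N : nat) (f g : R -> R) : Prop :=
  cont_on_I xs N g /\ g (xs 0%nat) = f (xs 0%nat) /\ g (xs N) = f (xs N).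

Definition Tmap (xs : nat -> R) (N : nat) (alpha : nat -> nat -> R -> R)
  (f b : R -> R) (r : nat) (g : R -> R) : R -> R :=
  fun x => let i := seg xs N x in
    f x + alpha i r (Qmap xs N i x) * (g (Qmap xs N i x) - b (Qmap xs N i x)).

(* compT n g = T^{alpha_0} o T^{alpha_1} o ... o T^{alpha_{n-1}} g,
   with base functions b_r = L r f *)
Fixpoint compT (xs : nat -> R) (N : nat) (alpha : nat -> nat -> R -> R)
  (L : nat -> (R -> R) -> (R -> R)) (f : R -> R) (n : nat) (g : R -> R)
  : R -> R :=
  match n with
  | O => g
  | S m => compT xs N alpha L f m (Tmap xs N alpha f (L m f) m g)
  end.

(* phi is the non-stationary alpha-fractal function f^alpha_b (b_r = L_r f):
   for every g in C_f(I), compT n g converges uniformly on I to phi. *)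
Definition is_fractal (xs : nat -> R) (N : nat) (alpha : nat -> nat -> R -> R)
  (L : nat -> (R -> R) -> (R -> R)) (f phi : R -> R) : Prop :=
  forall g, in_Cf xs N f g ->
    forall eps, 0 < eps -> exists n0 : nat, forall n, (n0 <= n)%nat ->
      dist_le xs N (compT xs N alpha L f n g) phi eps.

From Stdlib Require Import Reals Lra Lia ClassicalEpsilon.
Open Scope R_scope.

(* Each map T^{alpha_k} is a sup-norm contraction of ratio s = sup |alpha| < 1,
   and replacing (f, L_k f) by (h, L_k h) perturbs it by at most
   |f - h| + s |L_k f - L_k h|.  The iterates for f and for every h near f stay
   in a common invariant ball, so both fractal functions are close to m-fold
   compositions applied to functions of that ball, with m depending only on its
   radius.  For this fixed m only L_0, ..., L_{m-1} enter, and the accumulated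
   perturbation (|f - h| + s max_k |L_k f - L_k h|) / (1 - s) is small by their
   continuity. *)

Lemma Rabs_sub_triang a b c : Rabs (a - c) <= Rabs (a - b) + Rabs (b - c).
Proof. replace (a - c) with ((a - b) + (b - c)) by ring. apply Rabs_triang. Qed.

Section SupDistance.

Variables (xs : nat -> R) (N : nat).
Local Notation dist := (dist_le xs N).

Lemma dist_le_weaken g h c c' : dist g h c -> c <= c' -> dist g h c'.
Proof. intros H Hc x Hx. specialize (H x Hx). lra. Qed.

Lemma dist_le_sym g h c : dist g h c -> dist h g c.
Proof. intros H x Hx. rewrite Rabs_minus_sym. auto. Qed.

Lemma dist_le_triangle g h k c1 c2 :
  dist g h c1 -> dist h k c2 -> dist g k (c1 + c2).
Proof.
  intros H1 H2 x Hx. specialize (H1 x Hx). specialize (H2 x Hx).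
  pose proof (Rabs_sub_triang (g x) (h x) (k x)). lra.
Qed.

Lemma dist_le_refl g : dist g g 0.
Proof. intros x _. rewrite Rminus_diag, Rabs_R0. lra. Qed.

End SupDistance.

Lemma pow_mul_lt s C eps : 0 <= s < 1 -> 0 < eps -> 0 <= C ->
  exists n0, forall n, (n0 <= n)%nat -> s ^ n * C < eps.
Proof.
  intros Hs Heps HC.
  assert (Hy : 0 < eps / (C + 1)) by (apply Rdiv_lt_0_compat; lra).
  destruct (pow_lt_1_zero s ltac:(rewrite Rabs_right; lra) _ Hy) as [n0 Hn0].
  exists n0. intros n Hn. specialize (Hn0 n Hn).
  pose proof (pow_le s n ltac:(lra)) as Hpow.
  rewrite Rabs_right in Hn0 by lra.
  assert (s ^ n * (C + 1) < eps / (C + 1) * (C + 1)) by (apply Rmult_lt_compat_r; lra).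
  replace (eps / (C + 1) * (C + 1)) with eps in * by (field; lra). nra.
Qed.

Lemma common_delta (P : nat -> R -> Prop) m :
  (forall k, exists del, 0 < del /\ P k del) ->
  (forall k del del', 0 < del' <= del -> P k del -> P k del') ->
  exists del, 0 < del /\ forall k, (k < m)%nat -> P k del.
Proof.
  intros Hex Hmon. induction m as [|m [del1 [Hdel1 H1]]].
  - exists 1. split; [lra | lia].
  - destruct (Hex m) as [del2 [Hdel2 H2]].
    assert (Hmin : 0 < Rmin del1 del2) by (apply Rmin_glb_lt; auto).
    exists (Rmin del1 del2). split; [exact Hmin|].
    intros k Hk. destruct (Nat.eq_dec k m) as [->|Hne].
    + apply Hmon with del2; [split; [exact Hmin | apply Rmin_r] | exact H2].
    + apply Hmon with del1; [split; [exact Hmin | apply Rmin_l] | apply H1; lia].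
Qed.

Lemma geometric_uniform_limit (P : R -> Prop) (u : nat -> R -> R) s C :
  0 <= s < 1 -> 0 <= C ->
  (forall n p x, P x -> Rabs (u (n + p)%nat x - u n x) <= s ^ n * C) ->
  exists phi, forall n x, P x -> Rabs (u n x - phi x) <= s ^ n * C.
Proof.
  intros Hs HC Htail.
  assert (Hlim : forall x, exists l, P x -> Un_cv (fun n => u n x) l).
  { intros x. destruct (classic (P x)) as [Hx|Hx]; [|exists 0; tauto].
    assert (Hcauchy : Cauchy_crit (fun n => u n x)).
    { intros eps Heps.
      destruct (pow_mul_lt s (C + C) eps Hs Heps ltac:(lra)) as [n0 Hn0].
      exists n0. intros n m Hn Hm. unfold Rdist.
      pose proof (Htail n0 (n - n0)%nat x Hx) as Hn'.
      pose proof (Htail n0 (m - n0)%nat x Hx) as Hm'.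
      replace (n0 + (n - n0))%nat with n in Hn' by lia.
      replace (n0 + (m - n0))%nat with m in Hm' by lia.
      rewrite Rabs_minus_sym in Hm'. specialize (Hn0 n0 (le_n _)).
      pose proof (Rabs_sub_triang (u n x) (u n0 x) (u m x)). lra. }
    destruct (R_complete _ Hcauchy) as [l Hl]. exists l. auto. }
  destruct (choice _ Hlim) as [phi Hphi].
  exists phi. intros n x Hx. apply Rle_plus_epsilon. intros eps Heps.
  destruct (Hphi x Hx eps Heps) as [m Hm].
  specialize (Hm (n + m)%nat ltac:(lia)). unfold Rdist in Hm.
  pose proof (Htail n m x Hx) as Hnm. rewrite Rabs_minus_sym in Hnm.
  pose proof (Rabs_sub_triang (u n x) (u (n + m)%nat x) (phi x)). lra.
Qed.

Definition clampI (xs : nat -> R) (N : nat) (y : R) : R :=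
  Rmax (xs 0%nat) (Rmin (xs N) y).

Section Partition.

Variables (N : nat) (xs : nat -> R).
Hypothesis Hxs : forall k, (k < N)%nat -> xs k < xs (S k).
Local Notation dist := (dist_le xs N).

Lemma xs_0_le k : (k <= N)%nat -> xs 0%nat <= xs k.
Proof.
  induction k as [|k IH]; intros Hk; [lra|].
  pose proof (Hxs k ltac:(lia)). pose proof (IH ltac:(lia)). lra.
Qed.

Lemma inI_xs_0 : inI xs N (xs 0%nat).
Proof. split; [lra | apply xs_0_le; lia]. Qed.

Lemma seg_spec x n : (1 <= n <= N)%nat -> xs 0%nat <= x <= xs n ->
  (1 <= seg xs n x <= n)%nat /\ xs (seg xs n x - 1)%nat <= x <= xs (seg xs n x).
Proof.
  induction n as [|[|n] IH]; intros Hn Hx; [lia | split; [simpl; lia | exact Hx] |].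
  cbn [seg]. destruct (Rle_dec x (xs (S n))) as [Hle|Hgt].
  - destruct (IH ltac:(lia) ltac:(lra)) as [H1 H2]. cbn [seg] in H1, H2.
    split; [lia | exact H2].
  - replace (S (S n) - 1)%nat with (S n) by lia. split; [lia | lra].
Qed.

Lemma Qmap_inI i x : (1 <= i <= N)%nat -> xs (i - 1)%nat <= x <= xs i ->
  inI xs N (Qmap xs N i x).
Proof.
  intros Hi Hx. unfold inI, Qmap.
  assert (Hlen : xs (i - 1)%nat < xs i).
  { replace i with (S (i - 1)) at 2 by lia. apply Hxs. lia. }
  pose proof (xs_0_le N (le_n _)) as H0N.
  set (q := ((xs N - xs 0%nat) * x - (xs N * xs (i - 1)%nat - xs 0%nat * xs i))
            / (xs i - xs (i - 1)%nat)).
  assert (Hq : q * (xs i - xs (i - 1)%nat)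
               = (xs N - xs 0%nat) * x - (xs N * xs (i - 1)%nat - xs 0%nat * xs i))
    by (unfold q; field; lra).
  split; apply Rmult_le_reg_r with (xs i - xs (i - 1)%nat); nra.
Qed.

Lemma seg_Qmap_inI x : (1 <= N)%nat -> inI xs N x ->
  (1 <= seg xs N x <= N)%nat /\ inI xs N (Qmap xs N (seg xs N x) x).
Proof.
  intros HN Hx. destruct (seg_spec x N ltac:(lia) Hx) as [Hseg Hsub].
  split; [exact Hseg | apply Qmap_inI; auto].
Qed.

Lemma clampI_inI y : inI xs N (clampI xs N y).
Proof.
  pose proof (xs_0_le N (le_n _)). unfold inI, clampI.
  split; [apply Rmax_l | apply Rmax_lub; [lra | apply Rmin_l]].
Qed.

Lemma clampI_id y : inI xs N y -> clampI xs N y = y.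
Proof.
  intros [H0 H1]. unfold clampI. rewrite Rmin_right, Rmax_right; lra.
Qed.

Lemma clampI_dist y z : Rabs (clampI xs N y - clampI xs N z) <= Rabs (y - z).
Proof.
  unfold clampI, Rmax, Rmin.
  repeat destruct Rle_dec; unfold Rabs; repeat destruct Rcase_abs; lra.
Qed.

Lemma cont_on_I_bounded g :
  cont_on_I xs N g -> exists c, 0 < c /\ dist g (fun _ => 0) c.
Proof.
  intros Hg.
  set (G := fun y => Rabs (g (clampI xs N y))).
  assert (HG : forall c, xs 0%nat <= c <= xs N -> continuity_pt G c).
  { intros c Hc eps Heps.
    destruct (Hg c Hc eps Heps) as [del [Hdel Hnear]].
    exists del. split; [exact Hdel|]. intros y [_ Hy]. simpl in *. unfold Rdist in *.
    unfold G. rewrite (clampI_id c Hc).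
    eapply Rle_lt_trans; [apply Rabs_triang_inv2|]. apply Hnear; [apply clampI_inI|].
    rewrite <- (clampI_id c Hc) at 1.
    eapply Rle_lt_trans; [apply clampI_dist | exact Hy]. }
  destruct (continuity_ab_maj G _ _ (xs_0_le N (le_n _)) HG) as [ymax [Hmax _]].
  exists (G ymax + 1). split; [unfold G; pose proof (Rabs_pos (g (clampI xs N ymax))); lra|].
  intros x Hx. specialize (Hmax x Hx). unfold G in *. rewrite (clampI_id x Hx) in Hmax.
  rewrite Rminus_0_r. lra.
Qed.

(* The first hypothesis says nothing about functions vanishing on I; for those,
   L_r g is compared with L_r of a small constant by continuity of L_r. *)
Lemma L_sup_bound d (L : nat -> (R -> R) -> (R -> R)) M :
  (forall r g c, lipd xs N d g -> (exists x, inI xs N x /\ g x <> 0) ->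
     dist g (fun _ => 0) c -> dist (L r g) (fun _ => 0) (M * c)) ->
  (forall r g, lipd xs N d g -> forall eps, 0 < eps ->
     exists delta, 0 < delta /\ forall h, lipd xs N d h ->
       dist g h delta -> dist (L r g) (L r h) eps) ->
  forall r g c, lipd xs N d g -> 0 < c -> dist g (fun _ => 0) c ->
  dist (L r g) (fun _ => 0) (Rabs M * c).
Proof.
  intros HB HLc r g c Hg Hc Hgc.
  assert (HMc : M * c <= Rabs M * c) by (apply Rmult_le_compat_r; [lra | apply Rle_abs]).
  destruct (classic (exists x, inI xs N x /\ g x <> 0)) as [Hnz|Hz].
  - apply dist_le_weaken with (M * c); auto.
  - intros x Hx. apply Rle_plus_epsilon. intros eps Heps.
    destruct (HLc r g Hg eps Heps) as [del [Hdel Hnear]].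
    set (k := Rmin del c).
    assert (Hk : 0 < k) by (apply Rmin_glb_lt; auto).
    assert (Hkconst : lipd xs N d (fun _ => k)).
    { exists 0. intros. rewrite Rminus_diag, Rabs_R0, Rmult_0_l. lra. }
    assert (Hgk : dist g (fun _ => k) del).
    { intros y Hy. destruct (Req_dec (g y) 0) as [->|Hne]; [|exfalso; eauto].
      rewrite Rminus_0_l, Rabs_Ropp, Rabs_right; [apply Rmin_l | lra]. }
    assert (HLk : dist (L r (fun _ => k)) (fun _ => 0) (M * c)).
    { apply HB; [exact Hkconst | exists (xs 0%nat); split; [apply inI_xs_0 | lra] |].
      intros y _. rewrite Rminus_0_r, Rabs_right; [apply Rmin_r | lra]. }
    pose proof (dist_le_triangle _ _ _ _ _ _ _ (Hnear _ Hkconst Hgk) HLk x Hx). lra.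
Qed.

Lemma lipd_cont_on_I d g : 0 < d -> lipd xs N d g -> cont_on_I xs N g.
Proof.
  intros Hd [K HK] x Hx eps Heps.
  set (K' := Rabs K + 1).
  assert (HK' : 0 < K') by (unfold K'; pose proof (Rabs_pos K); lra).
  assert (Hpos : forall a b, 0 < Rpower a b) by (intros; apply exp_pos).
  exists (Rpower (eps / K') (/ d)). split; [apply Hpos|].
  intros y Hy Hyx.
  destruct (Req_dec y x) as [->|Hne]; [rewrite Rminus_diag, Rabs_R0; lra|].
  assert (Hyx_pos : 0 < Rabs (y - x)) by (apply Rabs_pos_lt; lra).
  assert (Hpow : Rpower (Rabs (y - x)) d < eps / K').
  { replace (eps / K') with (Rpower (Rpower (eps / K') (/ d)) d).
    - apply Rlt_Rpower_l; auto.
    - rewrite Rpower_mult, Rinv_l, Rpower_1 by (try apply Rdiv_lt_0_compat; lra). reflexivity. }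
  specialize (HK y x Hy Hx Hne).
  pose proof (Hpos (Rabs (y - x)) d). pose proof (Rle_abs K).
  assert (K' * Rpower (Rabs (y - x)) d < K' * (eps / K')) by (apply Rmult_lt_compat_l; auto).
  replace (K' * (eps / K')) with eps in * by (field; lra).
  unfold K' in *. nra.
Qed.

Lemma lipd_in_Cf d f : 0 < d -> lipd xs N d f -> in_Cf xs N f f.
Proof. intros Hd Hf. split; [exact (lipd_cont_on_I d f Hd Hf) | auto]. Qed.

End Partition.

Section Iteration.

Variables (N : nat) (xs : nat -> R) (alpha : nat -> nat -> R -> R) (s : R).
Variable L : nat -> (R -> R) -> (R -> R).
Hypothesis HN : (1 <= N)%nat.
Hypothesis Hxs : forall k, (k < N)%nat -> xs k < xs (S k).
Hypothesis Hs01 : 0 <= s < 1.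
Hypothesis Hs : forall i r x, (1 <= i <= N)%nat -> inI xs N x -> Rabs (alpha i r x) <= s.

Local Notation dist := (dist_le xs N).
Local Notation step f k := (Tmap xs N alpha f (L k f) k).
Local Notation iter f n := (compT xs N alpha L f n).

Lemma Tmap_dist f1 f2 b1 b2 k a1 a2 cf cb D :
  dist f1 f2 cf -> dist b1 b2 cb -> dist a1 a2 D ->
  dist (Tmap xs N alpha f1 b1 k a1) (Tmap xs N alpha f2 b2 k a2) (cf + s * (D + cb)).
Proof.
  intros Hf Hb Ha x Hx. unfold Tmap.
  destruct (seg_Qmap_inI N xs Hxs x HN Hx) as [Hi Hq].
  set (i := seg xs N x) in *. set (q := Qmap xs N i x) in *.
  specialize (Hf x Hx). specialize (Hb q Hq). specialize (Ha q Hq).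
  specialize (Hs i k q Hi Hq).
  replace (f1 x + alpha i k q * (a1 q - b1 q) - (f2 x + alpha i k q * (a2 q - b2 q)))
    with ((f1 x - f2 x) + alpha i k q * ((a1 q - a2 q) - (b1 q - b2 q))) by ring.
  eapply Rle_trans; [apply Rabs_triang | apply Rplus_le_compat; [exact Hf|]].
  rewrite Rabs_mult. apply Rmult_le_compat; try apply Rabs_pos; [exact Hs|].
  eapply Rle_trans; [apply Rabs_triang|]. rewrite Rabs_Ropp. lra.
Qed.

Lemma Tmap_ball f b k a c cb R0 :
  dist f (fun _ => 0) c -> dist b (fun _ => 0) cb -> c + s * (R0 + cb) <= R0 ->
  dist a (fun _ => 0) R0 -> dist (Tmap xs N alpha f b k a) (fun _ => 0) R0.
Proof.
  intros Hf Hb HR Ha x Hx.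
  pose proof (Tmap_dist _ _ _ _ k _ _ _ _ _ Hf Hb Ha x Hx) as H.
  unfold Tmap at 2 in H. rewrite Rminus_diag, Rmult_0_r, Rplus_0_l in H. lra.
Qed.

(* e / (1 - s) is the fixed point of D |-> e + s D, which makes the distance
   bound e / (1 - s) + D an induction invariant. *)
Lemma compT_dist f h e n :
  (forall k a b D, (k < n)%nat -> dist a b D -> dist (step f k a) (step h k b) (e + s * D)) ->
  forall g1 g2 D, dist g1 g2 (e / (1 - s) + D) ->
  dist (iter f n g1) (iter h n g2) (e / (1 - s) + s ^ n * D).
Proof.
  intros Hstep. induction n as [|n IH]; intros g1 g2 D Hg; simpl.
  - rewrite Rmult_1_l. exact Hg.
  - replace (e / (1 - s) + s * s ^ n * D) with (e / (1 - s) + s ^ n * (s * D)) by ring.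
    apply IH; [intros; apply Hstep; auto; lia|].
    apply dist_le_weaken with (e + s * (e / (1 - s) + D)); [apply Hstep; auto; lia|].
    right. field. lra.
Qed.

Lemma compT_contract f n g1 g2 D :
  dist g1 g2 D -> dist (iter f n g1) (iter f n g2) (s ^ n * D).
Proof.
  intros Hg.
  apply dist_le_weaken with (0 / (1 - s) + s ^ n * D);
    [| rewrite Rdiv_0_l; lra].
  apply compT_dist.
  - intros k a b D' _ Hab. apply dist_le_weaken with (0 + s * (D' + 0)); [|lra].
    apply Tmap_dist; [apply dist_le_refl | apply dist_le_refl | exact Hab].
  - apply dist_le_weaken with D; [exact Hg | rewrite Rdiv_0_l; lra].
Qed.

Lemma compT_add_invariant (P : (R -> R) -> Prop) f :
  (forall k a, P a -> P (step f k a)) ->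
  forall n p g, P g -> exists W, P W /\ iter f (n + p) g = iter f n W.
Proof.
  intros Hinv n p. induction p as [|p IH]; intros g Hg.
  - exists g. rewrite Nat.add_0_r. auto.
  - rewrite Nat.add_succ_r. apply IH, Hinv, Hg.
Qed.

Lemma compT_perturb f h m del eta R0 W1 W2 :
  0 <= del -> 0 <= eta -> dist f h del -> (forall k, (k < m)%nat -> dist (L k f) (L k h) eta) ->
  dist W1 (fun _ => 0) R0 -> dist W2 (fun _ => 0) R0 ->
  dist (iter f m W1) (iter h m W2) ((del + s * eta) / (1 - s) + s ^ m * (R0 + R0)).
Proof.
  intros Hdel Heta Hfh HL HW1 HW2.
  apply compT_dist.
  - intros k a b D Hk Hab. apply dist_le_weaken with (del + s * (D + eta)); [|lra].
    apply Tmap_dist; auto.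
  - apply dist_le_weaken with (R0 + R0).
    + apply dist_le_triangle with (fun _ => 0); [exact HW1 | apply dist_le_sym, HW2].
    + assert (0 <= (del + s * eta) / (1 - s)).
      { apply Rmult_le_pos; [nra | apply Rlt_le, Rinv_0_lt_compat; lra]. }
      lra.
Qed.

End Iteration.

Section Fractal.

Variables (N : nat) (xs : nat -> R) (alpha : nat -> nat -> R -> R) (s : R).
Variables (d M : R) (L : nat -> (R -> R) -> (R -> R)).
Hypothesis HN : (1 <= N)%nat.
Hypothesis Hxs : forall k, (k < N)%nat -> xs k < xs (S k).
Hypothesis Hs01 : 0 <= s < 1.
Hypothesis Hs : forall i r x, (1 <= i <= N)%nat -> inI xs N x -> Rabs (alpha i r x) <= s.
Hypothesis Hd : 0 < d.
Hypothesis HLb : forall r g c, lipd xs N d g -> 0 < c ->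
  dist_le xs N g (fun _ => 0) c -> dist_le xs N (L r g) (fun _ => 0) (Rabs M * c).
Hypothesis HLc : forall r g, lipd xs N d g -> forall eps, 0 < eps ->
  exists delta, 0 < delta /\ forall h, lipd xs N d h ->
    dist_le xs N g h delta -> dist_le xs N (L r g) (L r h) eps.

Local Notation dist := (dist_le xs N).
Local Notation step f k := (Tmap xs N alpha f (L k f) k).
Local Notation iter f n := (compT xs N alpha L f n).
Local Notation radius c := (c * (1 + Rabs M) / (1 - s)).

Lemma le_radius c : 0 <= c -> c <= radius c.
Proof.
  intros Hc. pose proof (Rabs_pos M).
  apply Rmult_le_reg_r with (1 - s); [lra|].
  replace (radius c * (1 - s)) with (c * (1 + Rabs M)) by (field; lra). nra.
Qed.

Lemma step_ball f c : lipd xs N d f -> 0 < c -> dist f (fun _ => 0) c ->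
  forall k a, dist a (fun _ => 0) (radius c) -> dist (step f k a) (fun _ => 0) (radius c).
Proof.
  intros Hf Hc Hfc k a Ha.
  apply Tmap_ball with (s := s) (c := c) (cb := Rabs M * c); auto.
  assert (HR : (1 - s) * radius c = c * (1 + Rabs M)) by (field; lra).
  pose proof (Rabs_pos M).
  assert (s * (Rabs M * c) <= Rabs M * c).
  { rewrite <- (Rmult_1_l (Rabs M * c)) at 2. apply Rmult_le_compat_r; [nra | lra]. }
  lra.
Qed.

Lemma fractal_exists f : lipd xs N d f -> exists phi, is_fractal xs N alpha L f phi.
Proof.
  intros Hf.
  destruct (cont_on_I_bounded N xs Hxs f (lipd_cont_on_I N xs d f Hd Hf)) as [c [Hc Hfc]].
  set (R0 := radius c).
  assert (HcR : c <= R0) by (apply le_radius; lra).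
  assert (HfR : dist f (fun _ => 0) R0) by (apply dist_le_weaken with c; auto).
  destruct (geometric_uniform_limit (inI xs N) (fun n => iter f n f) s (R0 + R0))
    as [phi Hphi]; [exact Hs01 | lra | |].
  { intros n p x Hx.
    destruct (compT_add_invariant N xs alpha L (fun a => dist a (fun _ => 0) R0) f
                (step_ball f c Hf Hc Hfc) n p f HfR) as [W [HW ->]].
    apply (compT_contract N xs alpha s); auto.
    apply dist_le_triangle with (fun _ => 0); [exact HW | apply dist_le_sym, HfR]. }
  exists phi. intros g [Hgc _] eps Heps.
  destruct (cont_on_I_bounded N xs Hxs g Hgc) as [cg [Hcg Hgb]].
  assert (Hgf : dist g f (cg + R0))
    by (apply dist_le_triangle with (fun _ => 0); [exact Hgb | apply dist_le_sym, HfR]).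
  destruct (pow_mul_lt s (cg + R0 + (R0 + R0)) eps Hs01 Heps ltac:(lra)) as [n0 Hn0].
  exists n0. intros n Hn.
  apply dist_le_weaken with (s ^ n * (cg + R0) + s ^ n * (R0 + R0)).
  - apply dist_le_triangle with (iter f n f); [apply (compT_contract N xs alpha s); auto | exact (Hphi n)].
  - rewrite <- Rmult_plus_distr_l. specialize (Hn0 n Hn). lra.
Qed.

Lemma fractal_near_iterate f c phi m eps :
  lipd xs N d f -> 0 < c -> dist f (fun _ => 0) c -> is_fractal xs N alpha L f phi -> 0 < eps ->
  exists W, dist W (fun _ => 0) (radius c) /\ dist (iter f m W) phi eps.
Proof.
  intros Hf Hc Hfc Hphi Heps.
  destruct (Hphi f (lipd_in_Cf N xs d f Hd Hf) eps Heps) as [n0 Hn0].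
  assert (HfR : dist f (fun _ => 0) (radius c))
    by (apply dist_le_weaken with c; [exact Hfc | apply le_radius; lra]).
  destruct (compT_add_invariant N xs alpha L (fun a => dist a (fun _ => 0) (radius c)) f
              (step_ball f c Hf Hc Hfc) m n0 f HfR) as [W [HW E]].
  exists W. split; [exact HW|]. rewrite <- E. apply Hn0. lia.
Qed.

Lemma fractal_continuous f eps : lipd xs N d f -> 0 < eps ->
  exists delta, 0 < delta /\ forall h, lipd xs N d h -> dist f h delta ->
    forall phi psi, is_fractal xs N alpha L f phi -> is_fractal xs N alpha L h psi ->
    dist phi psi eps.
Proof.
  intros Hf Heps.
  destruct (cont_on_I_bounded N xs Hxs f (lipd_cont_on_I N xs d f Hd Hf)) as [c [Hc Hfc]].
  set (R0 := radius (c + 1)).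
  assert (HcR : c + 1 <= R0) by (apply le_radius; lra).
  set (eta := (1 - s) * eps / 8).
  assert (Heta : 0 < eta) by (unfold eta; apply Rdiv_lt_0_compat; [apply Rmult_lt_0_compat|]; lra).
  destruct (pow_mul_lt s (R0 + R0) (eps / 4) Hs01 ltac:(lra) ltac:(lra)) as [m Hm].
  specialize (Hm m (le_n _)).
  destruct (common_delta (fun k del => forall h, lipd xs N d h -> dist f h del ->
              dist (L k f) (L k h) eta) m) as [del0 [Hdel0 HLnear]].
  { intros k. exact (HLc k f Hf eta Heta). }
  { intros k del del' Hdel HP h Hh Hfh.
    apply HP; [exact Hh | apply dist_le_weaken with del'; [exact Hfh | lra]]. }
  set (del := Rmin del0 (Rmin 1 eta)).
  assert (Hdel : 0 < del /\ del <= del0 /\ del <= 1 /\ del <= eta).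
  { pose proof (Rmin_l del0 (Rmin 1 eta)). pose proof (Rmin_r del0 (Rmin 1 eta)).
    pose proof (Rmin_l 1 eta). pose proof (Rmin_r 1 eta).
    split; [apply Rmin_glb_lt; [|apply Rmin_glb_lt]; lra | unfold del; lra]. }
  exists del. split; [tauto|].
  intros h Hh Hfh phi psi Hphi Hpsi.
  assert (HfB : dist f (fun _ => 0) (c + 1)) by (apply dist_le_weaken with c; auto; lra).
  assert (HhB : dist h (fun _ => 0) (c + 1)).
  { rewrite Rplus_comm. apply dist_le_triangle with f; [|exact Hfc].
    apply dist_le_sym, dist_le_weaken with del; [exact Hfh | lra]. }
  destruct (fractal_near_iterate f (c + 1) phi m (eps / 8)) as [W1 [HW1 Hn1]]; auto; try lra.
  destruct (fractal_near_iterate h (c + 1) psi m (eps / 8)) as [W2 [HW2 Hn2]]; auto; try lra.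
  assert (HLfh : forall k, (k < m)%nat -> dist (L k f) (L k h) eta).
  { intros k Hk. apply HLnear; [exact Hk | exact Hh | apply dist_le_weaken with del; [exact Hfh | lra]]. }
  assert (Hiter := compT_perturb N xs alpha s L HN Hxs Hs01 Hs f h m del eta R0 W1 W2
    ltac:(lra) ltac:(lra) Hfh HLfh HW1 HW2).
  assert (He : (del + s * eta) / (1 - s) <= eps / 4).
  { apply Rmult_le_reg_r with (1 - s); [lra|].
    replace ((del + s * eta) / (1 - s) * (1 - s)) with (del + s * eta) by (field; lra).
    unfold eta in *. nra. }
  apply dist_le_weaken with (eps / 8 + ((del + s * eta) / (1 - s) + s ^ m * (R0 + R0)) + eps / 8);
    [|lra].
  apply dist_le_triangle with (iter h m W2); [|exact Hn2].
  apply dist_le_triangle with (iter f m W1); [apply dist_le_sym, Hn1 | exact Hiter].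
Qed.

End Fractal.

Theorem mainTheorem3
  (N : nat) (xs : nat -> R) (d : R)
  (alpha : nat -> nat -> R -> R) (L : nat -> (R -> R) -> (R -> R))
  (HN : (1 <= N)%nat)
  (Hxs : forall k, (k < N)%nat -> xs k < xs (S k))
  (Hd : 0 < d <= 1)
  (Halpha_cont : forall i r, (1 <= i <= N)%nat -> cont_on_I xs N (alpha i r))
  (Halpha_norm : exists s, s < 1 /\
     forall i r x, (1 <= i <= N)%nat -> inI xs N x -> Rabs (alpha i r x) <= s)
  (HL_wd : forall r g h, lipd xs N d g -> lipd xs N d h ->
     (forall x, inI xs N x -> g x = h x) ->
     forall x, inI xs N x -> L r g x = L r h x)
  (HL_lip : forall r g, lipd xs N d g -> lipd xs N d (L r g))
  (HL_end : forall r g, lipd xs N d g ->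
     L r g (xs 0%nat) = g (xs 0%nat) /\ L r g (xs N) = g (xs N))
  (HL_bdd : exists M, forall r g c, lipd xs N d g ->
     (exists x, inI xs N x /\ g x <> 0) ->
     dist_le xs N g (fun _ => 0) c -> dist_le xs N (L r g) (fun _ => 0) (M * c))
  (HL_cont : forall r g, lipd xs N d g -> forall eps, 0 < eps ->
     exists delta, 0 < delta /\ forall h, lipd xs N d h ->
       dist_le xs N g h delta -> dist_le xs N (L r g) (L r h) eps) :
  (forall f, lipd xs N d f -> exists phi, is_fractal xs N alpha L f phi) /\
  (forall f eps, lipd xs N d f -> 0 < eps ->
     exists delta, 0 < delta /\ forall h, lipd xs N d h ->
       dist_le xs N f h delta ->
       forall phi psi, is_fractal xs N alpha L f phi ->
         is_fractal xs N alpha L h psi -> dist_le xs N phi psi eps).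
Proof.
  destruct Halpha_norm as [s [Hs1 Hs]].
  assert (Hs0 : 0 <= s).
  { eapply Rle_trans; [apply Rabs_pos | apply (Hs 1%nat 0%nat)]; [lia | apply inI_xs_0; exact Hxs]. }
  destruct HL_bdd as [M HM].
  pose proof (L_sup_bound N xs Hxs d L M HM HL_cont) as HLb.
  split.
  - intros f. apply (fractal_exists N xs alpha s d M L); auto; lra.
  - intros f eps. apply (fractal_continuous N xs alpha s d M L); auto; lra.
Qed.
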